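(* Let $(G,E,\phi_c)$ be a twisted Exel–Pardo tuple. Then $c$ extends uniquely to a $1$-cocycle $c:G\times\mathcal P(E)\to\mathcal U(\ell)$ (i.e. $c(gh,\alpha)=c(g,h(\alpha))c(h,\alpha)$ for all $g,h\in G$, $\alpha\in\mathcal P(E)$) satisfying \[ c(g,v)=1,\qquad c(g,\alpha\beta)=c(g,\alpha)\,c(\phi(g,\alpha),\beta) \] for all $g\in G$, $v\in E^0$ and all concatenable $\alpha,\beta\in\mathcal P(E)$.
   Context: $\ell$ is a commutative unital ring, $\mathcal U(\ell)$ its unit group. A graph $E=(E^0,E^1,r,s)$; a path of length $n\ge1$ is $e_1\cdots e_n$ with $r(e_i)=s(e_{i+1})$, vertices are paths of length $0$, and $\mathcal P(E)$ is the set of finite paths; $\alpha,\beta$ are concatenable if $r(\alpha)=s(\beta)$. An Exel–Pardo tuple $(G,E,\phi)$: a group $G$ acting on $E$ by graph automorphisms and $\phi:G\times E^1\to G$ with $\phi(gh,e)=\phi(g,h(e))\phi(h,e)$ and $\phi(g,e)(v)=g(v)$ for all $v\in E^0$. A twisted tuple $(G,E,\phi_c)$ adds $c:G\times E^1\to\mathcal U(\ell)$ with $c(gh,e)=c(g,h(e))c(h,e)$. By a result of Exel and Pardo, the action and $\phi$ extend uniquely to an action of $G$ on $\mathcal P(E)$ and a $1$-cocycle $\phi:G\times\mathcal P(E)\to G$ such that $\phi(g,v)=g$ for $v\in E^0$, $|g(\alpha)|=|\alpha|$, $g(\alpha\beta)=g(\alpha)\phi(g,\alpha)(\beta)$ and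 $\phi(g,\alpha\beta)=\phi(\phi(g,\alpha),\beta)$; these extensions are used in the statement. *)

From mathcomp Require Import all_boot all_algebra.
Import GRing.Theory.
Local Open Scope ring_scope.
Set Implicit Arguments.
Unset Strict Implicit.

Definition is_unit (R : comPzRingType) (x : R) : Prop := exists y : R, x * y = 1.

Record is_group (G : Type) (mul : G -> G -> G) (one : G) (inv : G -> G) : Prop := {
  grp_assoc : forall x y z, mul x (mul y z) = mul (mul x y) z;
  grp_mul1l : forall x, mul one x = x;
  grp_mul1r : forall x, mul x one = x;
  grp_mulVl : forall x, mul (inv x) x = one;
  grp_mulVr : forall x, mul x (inv x) = one
}.

(* Finite paths of E = (V, Ed, r, s): a path is a pair (v, [e1;...;en]) with
   s e1 = v and r e_i = s e_(i+1); the length-0 paths are (v, [::]), i.e. the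
   vertices. *)
Fixpoint is_chain (V Ed : Type) (s r : Ed -> V) (v : V) (l : seq Ed) : Prop :=
  match l with
  | [::] => True
  | e :: l' => s e = v /\ is_chain s r (r e) l'
  end.

Definition is_path (V Ed : Type) (s r : Ed -> V) (p : V * seq Ed) : Prop :=
  is_chain s r p.1 p.2.

Fixpoint chain_end (V Ed : Type) (r : Ed -> V) (v : V) (l : seq Ed) : V :=
  match l with
  | [::] => v
  | e :: l' => chain_end r (r e) l'
  end.

Definition path_r (V Ed : Type) (r : Ed -> V) (p : V * seq Ed) : V :=
  chain_end r p.1 p.2.

Definition concatenable (V Ed : Type) (r : Ed -> V) (a b : V * seq Ed) : Prop :=
  path_r r a = b.1.

Definition path_concat (V Ed : Type) (a b : V * seq Ed) : V * seq Ed :=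
  (a.1, a.2 ++ b.2).

Definition edge_path (V Ed : Type) (s : Ed -> V) (e : Ed) : V * seq Ed :=
  (s e, [:: e]).

(* The Exel--Pardo extensions of the action and of phi to finite paths:
   g(e alpha) = g(e) phi(g,e)(alpha),  phi(g, e alpha) = phi(phi(g,e), alpha),
   g(v) = actV g v, phi(g,v) = g. *)
Fixpoint act_edges (G Ed : Type) (actE : G -> Ed -> Ed) (phi : G -> Ed -> G)
    (g : G) (l : seq Ed) : seq Ed :=
  match l with
  | [::] => [::]
  | e :: l' => actE g e :: act_edges actE phi (phi g e) l'
  end.

Fixpoint phi_edges (G Ed : Type) (phi : G -> Ed -> G) (g : G) (l : seq Ed) : G :=
  match l with
  | [::] => g
  | e :: l' => phi_edges phi (phi g e) l'
  end.

Definition path_act (G V Ed : Type) (actV : G -> V -> V) (actE : G -> Ed -> Ed)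
    (phi : G -> Ed -> G) (g : G) (p : V * seq Ed) : V * seq Ed :=
  (actV g p.1, act_edges actE phi g p.2).

Definition path_phi (G V Ed : Type) (phi : G -> Ed -> G) (g : G)
    (p : V * seq Ed) : G :=
  phi_edges phi g p.2.

Definition is_cocycle_extension (R : comPzRingType) (G V Ed : Type)
    (mul : G -> G -> G) (s r : Ed -> V)
    (actV : G -> V -> V) (actE : G -> Ed -> Ed) (phi : G -> Ed -> G)
    (c : G -> Ed -> R) (cP : G -> V * seq Ed -> R) : Prop :=
  [/\ (forall g e, cP g (edge_path s e) = c g e),
      (forall g a, is_path s r a -> is_unit (cP g a)),
      (forall g h a, is_path s r a ->
          cP (mul g h) a = cP g (path_act actV actE phi h a) * cP h a),
      (forall g v, cP g (v, [::]) = 1) &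
      (forall g a b, is_path s r a -> is_path s r b -> concatenable r a b ->
          cP g (path_concat a b) = cP g a * cP (path_phi phi g a) b)].

(* Splitting a path as its first edge followed by the rest, the concatenation
   rule forces c(g, e1 ... en) = c(g, e1) c(phi(g, e1), e2 ... en), which gives
   uniqueness. Conversely this recursion defines an extension, and the cocycle
   identity for it follows by induction on the length of the path from the
   cocycle identities of c and phi on edges. *)
From mathcomp Require Import all_boot all_algebra.
Import GRing.Theory.
Local Open Scope ring_scope.
Set Implicit Arguments.
Unset Strict Implicit.

Lemma is_unit1 (R : comPzRingType) : is_unit (1 : R).
Proof. by exists 1; rewrite mulr1. Qed.

Lemma is_unitM (R : comPzRingType) (x y : R) :
  is_unit x -> is_unit y -> is_unit (x * y).
Proof. by move=> [x' xx'] [y' yy']; exists (x' * y'); rewrite mulrACA xx' yy' mulr1. Qed.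

Section CocycleEdges.

Variables (R : comPzRingType) (G Ed : Type) (phi : G -> Ed -> G) (c : G -> Ed -> R).

Fixpoint cocycle_edges (g : G) (l : seq Ed) : R :=
  match l with
  | [::] => 1
  | e :: l' => c g e * cocycle_edges (phi g e) l'
  end.

Lemma cocycle_edges_cat g l m :
  cocycle_edges g (l ++ m) = cocycle_edges g l * cocycle_edges (phi_edges phi g l) m.
Proof.
elim: l g => [|e l IH] g /=; first by rewrite mul1r.
by rewrite IH mulrA.
Qed.

Hypothesis c_unit : forall g e, is_unit (c g e).

Lemma cocycle_edges_unit g l : is_unit (cocycle_edges g l).
Proof.
elim: l g => [|e l IH] g /=; first exact: is_unit1.
exact: is_unitM.
Qed.

Variables (mul : G -> G -> G) (actE : G -> Ed -> Ed).
Hypothesis phiM : forall g h e, phi (mul g h) e = mul (phi g (actE h e)) (phi h e).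
Hypothesis cM : forall g h e, c (mul g h) e = c g (actE h e) * c h e.

Lemma cocycle_edgesM g h l :
  cocycle_edges (mul g h) l =
  cocycle_edges g (act_edges actE phi h l) * cocycle_edges h l.
Proof.
elim: l g h => [|e l IH] g h /=; first by rewrite mulr1.
by rewrite phiM IH cM mulrACA.
Qed.

End CocycleEdges.

Section CocycleExtension.

Variables (R : comPzRingType) (G V Ed : Type) (mul : G -> G -> G) (s r : Ed -> V).
Variables (actV : G -> V -> V) (actE : G -> Ed -> Ed) (phi : G -> Ed -> G).
Variable c : G -> Ed -> R.

Lemma cocycle_edges_extension :
  (forall g e, is_unit (c g e)) ->
  (forall g h e, phi (mul g h) e = mul (phi g (actE h e)) (phi h e)) ->
  (forall g h e, c (mul g h) e = c g (actE h e) * c h e) ->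
  is_cocycle_extension mul s r actV actE phi c
    (fun g p => cocycle_edges phi c g p.2).
Proof.
move=> c_unit phiM cM; split=> [g e|g a _|g h a _|//|g a b _ _ _].
- exact: mulr1.
- exact: cocycle_edges_unit.
- exact: cocycle_edgesM.
- exact: cocycle_edges_cat.
Qed.

Lemma cocycle_extension_edgesE cP g a :
  is_cocycle_extension mul s r actV actE phi c cP -> is_path s r a ->
  cP g a = cocycle_edges phi c g a.2.
Proof.
case=> cP_edge _ _ cP_vertex cP_cat; case: a => v l.
rewrite /is_path /=; elim: l g v => [|e l IH] g v /=; first by move=> _; exact: cP_vertex.
case=> se_v chain_l.
have -> : (v, e :: l) = path_concat (edge_path s e) (r e, l) by rewrite /path_concat /= se_v.
by rewrite cP_cat // cP_edge (IH _ (r e)).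
Qed.

End CocycleExtension.

Theorem lemma2p2
  (R : comPzRingType)
  (G : Type) (mul : G -> G -> G) (one : G) (inv : G -> G)
  (HG : is_group mul one inv)
  (V Ed : Type) (r s : Ed -> V)
  (actV : G -> V -> V) (actE : G -> Ed -> Ed)
  (* G acts on E by graph automorphisms *)
  (actV1 : forall v, actV one v = v)
  (actVM : forall g h v, actV (mul g h) v = actV g (actV h v))
  (actE1 : forall e, actE one e = e)
  (actEM : forall g h e, actE (mul g h) e = actE g (actE h e))
  (act_s : forall g e, s (actE g e) = actV g (s e))
  (act_r : forall g e, r (actE g e) = actV g (r e))
  (* Exel--Pardo cocycle phi *)
  (phi : G -> Ed -> G)
  (phiM : forall g h e, phi (mul g h) e = mul (phi g (actE h e)) (phi h e))
  (phiV : forall g e v, actV (phi g e) v = actV g v)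
  (* twisting cocycle c *)
  (c : G -> Ed -> R)
  (c_unit : forall g e, is_unit (c g e))
  (cM : forall g h e, c (mul g h) e = c g (actE h e) * c h e) :
  (exists cP : G -> V * seq Ed -> R,
      is_cocycle_extension mul s r actV actE phi c cP) /\
  (forall cP1 cP2 : G -> V * seq Ed -> R,
      is_cocycle_extension mul s r actV actE phi c cP1 ->
      is_cocycle_extension mul s r actV actE phi c cP2 ->
      forall g a, is_path s r a -> cP1 g a = cP2 g a).
Proof.
split; first by eexists; exact: cocycle_edges_extension.
move=> cP1 cP2 ext1 ext2 g a path_a.
by rewrite (cocycle_extension_edgesE g ext1 path_a) (cocycle_extension_edgesE g ext2 path_a).
Qed.
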